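(* Let $c\ge1$, $\eta=1+2\log c$, $V(k)=k^2-2\log k$ for $k>0$, and let $k_{\min}\le 1$ be the unique $k\le1$ with $V(k)=\eta$. Let $k_{\min}\le k_1<1$ and $0<k_0\le k_1$, and put $\bar V(k)=(1+\frac1{k_0})(k-1)^2+H$ where $H$ is chosen so that $\bar V(k_1)=V(k_1)$. Then $V(k)>\bar V(k)$ for all $k\in(k_1,1)$, and for every $k_1<k_2\le1$, \[\int_{k_1}^{k_2}\frac{dk}{\sqrt{\eta-V(k)}}>\frac{1}{\sqrt{1+\frac1{k_0}}}\left(\sin^{-1}\Big(\frac{1-k_1}{a}\Big)-\sin^{-1}\Big(\frac{1-k_2}{a}\Big)\right),\qquad a=\sqrt{\frac{\eta-H}{1+\frac1{k_0}}}.\] Moreover, if $k_1=k_{\min}$ then $a=1-k_{\min}$. *)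

From HB Require Import structures.
From mathcomp Require Import all_boot all_order all_algebra.
From mathcomp Require Import all_classical all_reals all_analysis.
Set Implicit Arguments. Unset Strict Implicit. Unset Printing Implicit Defensive.
Import Order.TTheory GRing.Theory Num.Theory.
Local Open Scope ring_scope.

Definition eta_c {R : realType} (c : R) : R := 1 + 2 * ln c.
Definition Vpot {R : realType} (k : R) : R := k ^+ 2 - 2 * ln k.
Definition Hconst {R : realType} (k0 k1 : R) : R :=
  Vpot k1 - (1 + k0^-1) * (k1 - 1) ^+ 2.
Definition Vbar {R : realType} (k0 k1 k : R) : R :=
  (1 + k0^-1) * (k - 1) ^+ 2 + Hconst k0 k1.
Definition a_const {R : realType} (c k0 k1 : R) : R :=
  Num.sqrt ((eta_c c - Hconst k0 k1) / (1 + k0^-1)).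

(* With K = 1 + 1/k0, the function V(k) - K (k - 1)^2 has derivative
   2 (1 - k) (1/k0 - 1/k), which is positive on ]k0, 1[; it equals H at k1, so
   V > Vbar on ]k1, 1[.  Since V decreases on ]0, 1] and V(kmin) = eta, also
   V(k1) <= eta, whence eta - Vbar(k) = K (a^2 - (1 - k)^2) with
   a^2 = (1 - k1)^2 + (eta - V(k1))/K, and a = 1 - k1 exactly when V(k1) = eta.
   So 1/sqrt(eta - V) strictly dominates 1/sqrt(K (a^2 - (1 - k)^2)) on ]k1, k2[,
   and the latter has primitive -asin((1 - k)/a)/sqrt K. *)

From mathcomp Require Import all_boot all_order all_algebra.
From mathcomp Require Import all_classical all_reals all_analysis.
From mathcomp Require Import measurable_realfun.
From mathcomp Require Import ring lra.
Import Order.TTheory GRing.Theory Num.Theory.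
Import numFieldNormedType.Exports.
Local Open Scope ring_scope.
Local Open Scope classical_set_scope.

Lemma continuous_inv_sqrt {R : realType} (h : R -> R) (x : R) :
  continuous_at x h -> 0 < h x -> continuous_at x (fun k => 1 / Num.sqrt (h k)).
Proof.
move=> ch hx0.
apply: (@continuous_comp _ _ _ h (fun y => 1 / Num.sqrt y)) => //.
have -> : (fun y : R => 1 / Num.sqrt y) = (fun y => (Num.sqrt y)^-1).
  by apply/funext => y; rewrite div1r.
apply: (@continuous_comp _ _ _ (@Num.sqrt R) (@GRing.inv R)).
  exact: sqrt_continuous.
by apply: inv_continuous; rewrite gt_eqF // sqrtr_gt0.
Qed.

Section IntegralItv.
Context {R : realType}.
Variables (x y : R).
Hypothesis xy : x < y.

Lemma integral_itv_oo_gt0 (h : R -> R) : measurable_fun `]x, y[ h ->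
  (forall k, x < k < y -> 0 < h k) ->
  (0 < \int[lebesgue_measure]_(k in `]x, y[) (h k)%:E)%E.
Proof.
move=> mh h0.
have hD k : `]x, y[ k -> 0 < h k by rewrite /= in_itv /=; exact: h0.
rewrite lt0e integral_ge0 ?andbT; last by move=> k /hD/ltW; rewrite lee_fin.
apply/negP => /eqP int0.
have mD : measurable (`]x, y[ : set R) by [].
have abs0 : (\int[lebesgue_measure]_(k in `]x, y[) `|(h k)%:E|)%E = 0%E.
  rewrite -int0; apply: eq_integral => k /[!inE] /hD/ltW hk.
  by rewrite gee0_abs // lee_fin.
have mhE : measurable_fun `]x, y[ (fun k => (h k)%:E) by exact/measurable_EFinP.
have [N [mN N0 DN]] := (ae_eq_integral_abs lebesgue_measure mD mhE).1 abs0.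
have DN' : `]x, y[ `<=` N.
  move=> k Dk; apply: DN => /= /(_ Dk) /eqP.
  by rewrite eqe gt_eqF ?hD.
have : (lebesgue_measure `]x, y[ = 0)%E.
  exact: (@subset_measure0 _ _ _ lebesgue_measure _ _ mD mN DN' N0).
by rewrite lebesgue_measure_itv /= lte_fin xy -EFinB => /eqP; rewrite eqe subr_eq0 gt_eqF.
Qed.

Lemma integral_itv_oo_lt (f g : R -> R) (r : R) :
  measurable_fun `]x, y[ f -> measurable_fun `]x, y[ g ->
  (forall k, x < k < y -> 0 <= g k < f k) ->
  (r%:E <= \int[lebesgue_measure]_(k in `]x, y[) (g k)%:E)%E ->
  (r%:E < \int[lebesgue_measure]_(k in `]x, y[) (f k)%:E)%E.
Proof.
move=> mf mg gf rg.
have gfD k : `]x, y[ k -> 0 <= g k < f k by rewrite /= in_itv /=; exact: gf.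
have -> : (\int[lebesgue_measure]_(k in `]x, y[) (f k)%:E =
    \int[lebesgue_measure]_(k in `]x, y[) (g k)%:E +
    \int[lebesgue_measure]_(k in `]x, y[) (f k - g k)%:E)%E.
  rewrite -ge0_integralD //.
  - by apply: eq_integral => k _; rewrite -EFinD addrC subrK.
  - by move=> k /gfD /andP[]; rewrite lee_fin.
  - exact/measurable_EFinP.
  - by move=> k /gfD; rewrite lee_fin subr_ge0 => /andP[_ /ltW].
  - exact/measurable_EFinP/measurable_funB.
have : (0 < \int[lebesgue_measure]_(k in `]x, y[) (f k - g k)%:E)%E.
  apply: integral_itv_oo_gt0; first exact: measurable_funB.
  by move=> k /gf; rewrite subr_gt0 => /andP[].
move: rg; case: (\int[_]_(_ in _) (g _)%:E)%E => [s| |];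
  case: (\int[_]_(_ in _) (_ - _)%:E)%E => [t| |] //=.
- by rewrite -EFinD !lte_fin lee_fin; lra.
- by move=> _ _; rewrite addey // ltry.
Qed.

End IntegralItv.

Section ArcsineIntegral.
Context {R : realType}.
Variables (K a : R).
Hypotheses (K0 : 0 < K) (a0 : 0 < a).

Local Notation F y := (- asin ((1 - y) / a) / Num.sqrt K).
Local Notation g k := (1 / Num.sqrt (K * (a ^+ 2 - (1 - k) ^+ 2))).

Lemma is_derive_arcsine k : 1 - a < k < 1 + a ->
  is_derive k 1 (fun y => F y) (g k).
Proof.
move=> ka; set u := (1 - k) / a.
have u1 : -1 < u < 1.
  by move: ka => /andP[k1 k2]; rewrite ltr_pdivlMr ?ltr_pdivrMr //; lra.
have du : is_derive k 1 (fun y : R => (1 - y) / a) (- a^-1).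
  by apply: is_derive_eq; rewrite /GRing.scale /=; ring.
have dasin := is_derive1_asin u1.
have dcomp := @is_derive1_comp R asin (fun y => (1 - y) / a) k _ _ dasin du.
apply: is_derive_eq.
have sK : 0 < Num.sqrt K by rewrite sqrtr_gt0.
have su : 0 < Num.sqrt (1 - u ^+ 2) by rewrite sqrtr_gt0; nra.
have -> : K * (a ^+ 2 - (1 - k) ^+ 2) = (Num.sqrt K * a) ^+ 2 * (1 - u ^+ 2).
  by rewrite exprMn sqr_sqrtr ?(ltW K0) // /u; field; lra.
rewrite sqrtrM ?sqr_ge0 // sqrtr_sqr ger0_norm ?mulr_ge0 ?ltW //.
by rewrite /GRing.scale /=; field; rewrite !gt_eqF.
Qed.

Lemma continuous_arcsine_density k : 1 - a < k < 1 + a -> continuous_at k (fun k => g k).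
Proof.
move=> /andP[ak ka]; apply: continuous_inv_sqrt; last by rewrite mulr_gt0 // subr_gt0; nra.
have : derivable (fun y : R => K * (a ^+ 2 - (1 - y) ^+ 2)) k 1 by apply: ex_derive.
by move/derivable1_diffP/differentiable_continuous.
Qed.

Lemma measurable_arcsine_density x y : 1 - a <= x -> y <= 1 + a ->
  measurable_fun `]x, y[ (fun k => g k).
Proof.
move=> ax ya; apply: open_continuous_measurable_fun; first exact: interval_open.
move=> k; rewrite inE /= in_itv /= => /andP[xk ky].
by apply: continuous_arcsine_density; apply/andP; split; lra.
Qed.

Lemma integral_arcsine_density x y : 1 - a < x -> x < y -> y < 1 + a ->
  (\int[lebesgue_measure]_(k in `]x, y[) (g k)%:E = (F y)%:E - (F x)%:E)%E.
Proof.
move=> ax xy ya.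
have dF k : x <= k <= y -> is_derive k 1 (fun y => F y) (g k).
  by move=> /andP[xk ky]; apply: is_derive_arcsine; apply/andP; split; lra.
rewrite -(@integral_itv_bndoo _ _ _ _ true false); last first.
  by apply/measurable_EFinP; apply: measurable_arcsine_density; lra.
apply: (@continuous_FTC2 _ (fun k => g k) (fun y => F y)) => //.
- apply: continuous_in_subspaceT => k; rewrite inE /= in_itv /= => /andP[xk ky].
  by apply: continuous_arcsine_density; apply/andP; split; lra.
- split.
  + by move=> k; rewrite in_itv /= => /andP[xk ky]; case: (dF k); rewrite ?ltW.
  + apply: cvg_at_right_filter.
    have /dF [] : x <= x <= y by rewrite lexx ltW.
    by move=> /derivable1_diffP/differentiable_continuous.
  + apply: cvg_at_left_filter.
    have /dF [] : x <= y <= y by rewrite lexx ltW.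
    by move=> /derivable1_diffP/differentiable_continuous.
- move=> k; rewrite in_itv /= => /andP[xk ky].
  have dk : is_derive k 1 (fun y => F y) (g k) by apply: dF; rewrite !ltW.
  by rewrite derive1E derive_val.
Qed.

Lemma integral_arcsine_density_ge x y : 1 - a <= x -> x < y -> y < 1 + a ->
  ((1 / Num.sqrt K * (asin ((1 - x) / a) - asin ((1 - y) / a)))%:E
    <= \int[lebesgue_measure]_(k in `]x, y[) (g k)%:E)%E.
Proof.
move=> ax xy ya.
have sK : 0 < Num.sqrt K by rewrite sqrtr_gt0.
have gD : forall k, `]x, y[ k -> (0 <= (g k)%:E)%E.
  by move=> k _; rewrite lee_fin div1r invr_ge0 sqrtr_ge0.
have mg : measurable_fun `]x, y[ (fun k => (g k)%:E).
  by apply/measurable_EFinP; apply: measurable_arcsine_density; lra.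
set u1 := (1 - x) / a; set u2 := (1 - y) / a.
have u1a : u1 * a = 1 - x by rewrite divfK ?gt_eqF.
have u2a : u2 * a = 1 - y by rewrite divfK ?gt_eqF.
have u21 : -1 < u2 < u1 by apply/andP; split; nra.
have u11 : u1 <= 1 by nra.
set t1 := asin u1; set t2 := asin u2.
have pi2 (u : R) : -1 <= u <= 1 -> asin u \in `[- (pi / 2), pi / 2]%R.
  by move=> u1'; rewrite in_itv /= asin_geNpi2 ?asin_lepi2.
have t1pi : t1 \in `[- (pi / 2), pi / 2]%R by apply: pi2; lra.
have t2pi : t2 \in `[- (pi / 2), pi / 2]%R by apply: pi2; lra.
have st1 : sin t1 = u1 by apply: asinK; rewrite in_itv /=; lra.
have st2 : sin t2 = u2 by apply: asinK; rewrite in_itv /=; lra.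
have t21 : t2 < t1 by rewrite -ltr_sin // st1 st2; lra.
(* The density blows up at [x] when [1 - x = a]: integrate instead from the
   point [z] whose angle is [sqrt K * e] below that of [x]. *)
apply/lee_subgt0Pr => e e0.
have [te|et] := ltP (Num.sqrt K * e) (t1 - t2); last first.
  apply: (le_trans _ (integral_ge0 lebesgue_measure gD)).
  by rewrite -EFinB lee_fin subr_le0 div1r ler_pdivrMl.
have se : 0 < Num.sqrt K * e by exact: mulr_gt0.
set t := t1 - Num.sqrt K * e.
have tpi : t \in `[- (pi / 2), pi / 2]%R.
  move: t1pi t2pi; rewrite !in_itv /= => /andP[? ?] /andP[? ?].
  by rewrite /t; apply/andP; split; lra.
have [st1' st2'] : sin t < u1 /\ u2 < sin t.
  by rewrite -st1 -st2 !ltr_sin // /t; split; lra.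
set z := 1 - a * sin t.
have xz : x < z by rewrite /z; nra.
have zy : z < y by rewrite /z; nra.
have asz : asin ((1 - z) / a) = t.
  have -> : (1 - z) / a = sin t by rewrite /z; field; rewrite gt_eqF.
  exact: sinK.
have zyxy : `]z, y[ `<=` `]x, y[ by apply: subset_itvr; rewrite bnd_simp ltW.
apply: (le_trans _ (ge0_subset_integral lebesgue_measure _ _ mg gD zyxy)) => //.
rewrite integral_arcsine_density; [|lra|by []|by []].
rewrite asz -EFinB lee_fin le_eqVlt; apply/orP; left; apply/eqP.
by rewrite -/u2 -/t2 /t; field; rewrite gt_eqF.
Qed.

End ArcsineIntegral.

Section Potential.
Context {R : realType}.
Implicit Types (c k x y K : R).

Lemma is_derive_Vpot k : 0 < k -> is_derive k 1 Vpot (2 * k - 2 * k^-1).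
Proof.
move=> k0; have dln := is_derive1_ln k0.
rewrite /Vpot; apply: is_derive_eq; rewrite /GRing.scale /=; ring.
Qed.

Lemma is_derive_Vpot_subparab K k : 0 < k ->
  is_derive k 1 (fun x => Vpot x - K * (x - 1) ^+ 2) (2 * (1 - k) * (K - 1 - k^-1)).
Proof.
move=> k0; have dV := is_derive_Vpot _ k0.
apply: is_derive_eq; rewrite /GRing.scale /=; field; lra.
Qed.

Lemma Vpot_subparab_lt K x y : 0 < x -> x < y -> y <= 1 -> 1 + x^-1 <= K ->
  Vpot x - K * (x - 1) ^+ 2 < Vpot y - K * (y - 1) ^+ 2.
Proof.
move=> x0 xy y1 xK.
have dV k : x <= k -> is_derive k 1 (fun x => Vpot x - K * (x - 1) ^+ 2)
    (2 * (1 - k) * (K - 1 - k^-1)).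
  by move=> xk; apply: is_derive_Vpot_subparab; lra.
apply: (@gtr0_derive1_lt_cc _ (fun k => Vpot k - K * (k - 1) ^+ 2) x y);
  rewrite ?in_itv /= ?lexx ?(ltW xy) //.
- by move=> k; rewrite in_itv /= => /andP[/ltW/dV[]].
- move=> k; rewrite in_itv /= => /andP[xk ky].
  have dk := dV k (ltW xk); rewrite derive1E derive_val.
  have : k^-1 < x^-1 by rewrite ltf_pV2 ?posrE //; lra.
  nra.
- by apply: derivable_within_continuous => k; rewrite in_itv /= => /andP[/dV[]].
Qed.

Lemma Vpot_lt x y : 0 < x -> x < y -> y <= 1 -> Vpot y < Vpot x.
Proof.
move=> x0 xy y1.
have dV k : x <= k -> is_derive k 1 Vpot (2 * k - 2 * k^-1).
  by move=> xk; apply: is_derive_Vpot; lra.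
apply: (@ltr0_derive1_lt_cc _ Vpot x y); rewrite ?in_itv /= ?lexx ?(ltW xy) //.
- by move=> k; rewrite in_itv /= => /andP[/ltW/dV[]].
- move=> k; rewrite in_itv /= => /andP[xk ky].
  have dk := dV k (ltW xk); rewrite derive1E derive_val.
  have : 1 < k^-1 by rewrite invf_gt1; lra.
  lra.
- by apply: derivable_within_continuous => k; rewrite in_itv /= => /andP[/dV[]].
Qed.

Lemma Vbar_lt_Vpot k0 k1 k : 0 < k0 -> k0 <= k1 -> k1 < k -> k < 1 ->
  Vbar k0 k1 k < Vpot k.
Proof.
move=> k00 k01 k1k k1'.
have k10 : 0 < k1 by lra.
have K1 : 1 + k1^-1 <= 1 + k0^-1 by rewrite lerD2l lef_pV2 ?posrE.
have := Vpot_subparab_lt _ _ _ k10 k1k (ltW k1') K1.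
by rewrite /Vbar /Hconst; lra.
Qed.

Lemma sqr_a_const c k0 k1 : 0 < k0 -> Vpot k1 <= eta_c c ->
  a_const c k0 k1 ^+ 2 = (1 - k1) ^+ 2 + (eta_c c - Vpot k1) / (1 + k0^-1).
Proof.
move=> k00 V1; have K0 : 0 < 1 + k0^-1 by rewrite ltr_wpDr ?invr_ge0 ?ltW.
rewrite sqr_sqrtr; first by rewrite /Hconst; field; lra.
rewrite divr_ge0 ?(ltW K0) // /Hconst.
by have := sqr_ge0 (k1 - 1); nra.
Qed.

Lemma eta_sub_Vbar c k0 k1 k : 0 < k0 -> Vpot k1 <= eta_c c ->
  eta_c c - Vbar k0 k1 k = (1 + k0^-1) * (a_const c k0 k1 ^+ 2 - (1 - k) ^+ 2).
Proof.
move=> k00 V1; have K0 : 0 < 1 + k0^-1 by rewrite ltr_wpDr ?invr_ge0 ?ltW.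
by rewrite sqr_a_const // /Vbar /Hconst; field; lra.
Qed.

Lemma a_const_ge c k0 k1 : 0 < k0 -> k1 <= 1 -> Vpot k1 <= eta_c c ->
  1 - k1 <= a_const c k0 k1.
Proof.
move=> k00 k11 V1; have K0 : 0 < 1 + k0^-1 by rewrite ltr_wpDr ?invr_ge0 ?ltW.
rewrite -ler_sqr ?nnegrE ?subr_ge0 ?sqrtr_ge0 // sqr_a_const // lerDl.
by rewrite divr_ge0 ?subr_ge0 ?(ltW K0).
Qed.

Lemma a_const_eq c k0 k1 : 0 < k0 -> k1 <= 1 -> Vpot k1 = eta_c c ->
  a_const c k0 k1 = 1 - k1.
Proof.
move=> k00 k11 V1.
apply/eqP; rewrite -(@eqrXn2 _ 2) ?subr_ge0 ?sqrtr_ge0 //.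
by rewrite sqr_a_const ?V1 // subrr mul0r addr0.
Qed.

End Potential.

Lemma integral_inv_sqrt_eta_sub_Vpot_gt {R : realType} (c k0 k1 k2 : R) :
  0 < k0 -> k0 <= k1 -> k1 < k2 -> k2 <= 1 -> Vpot k1 <= eta_c c ->
  (((1 / Num.sqrt (1 + k0^-1)) *
     (asin ((1 - k1) / a_const c k0 k1) - asin ((1 - k2) / a_const c k0 k1)))%:E
   < \int[lebesgue_measure]_(k in `]k1, k2[) (1 / Num.sqrt (eta_c c - Vpot k))%:E)%E.
Proof.
move=> k00 k01 k12 k21 V1.
set K := 1 + k0^-1; set a := a_const c k0 k1.
have K0 : 0 < K by rewrite ltr_wpDr ?invr_ge0 ?ltW.
have a1 : 1 - k1 <= a by apply: a_const_ge; lra.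
have a0 : 0 < a by lra.
have Veta k : k1 < k -> k <= 1 -> Vpot k < eta_c c.
  by move=> k1k k1'; apply: (lt_le_trans _ V1); apply: Vpot_lt => //; lra.
have radicand k : k1 < k < k2 ->
    0 < eta_c c - Vpot k < K * (a ^+ 2 - (1 - k) ^+ 2).
  move=> /andP[k1k kk2]; rewrite -eta_sub_Vbar // subr_gt0 Veta ?ltrD2l ?ltrN2 //=; last lra.
  by apply: Vbar_lt_Vpot => //; lra.
have lb : (((1 / Num.sqrt K) *
      (asin ((1 - k1) / a) - asin ((1 - k2) / a)))%:E
    <= \int[lebesgue_measure]_(k in `]k1, k2[)
         (1 / Num.sqrt (K * (a ^+ 2 - (1 - k) ^+ 2)))%:E)%E.
  by apply: integral_arcsine_density_ge => //; lra.
apply: (@integral_itv_oo_lt R k1 k2 k12 _ _ _ _ _ _ lb).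
- apply: open_continuous_measurable_fun; first exact: interval_open.
  move=> k; rewrite inE /= in_itv /= => kD; have /andP[Vk _] := radicand k kD.
  apply: continuous_inv_sqrt => //.
  have k0' : 0 < k by case/andP: kD; lra.
  have dV := is_derive_Vpot _ k0'.
  have : derivable (fun y => eta_c c - Vpot y) k 1 by apply: ex_derive.
  by move/derivable1_diffP/differentiable_continuous.
- by apply: measurable_arcsine_density; lra.
- move=> k /radicand /andP[Vk VK].
  rewrite !div1r invr_ge0 sqrtr_ge0 /= ltf_pV2 ?posrE ?sqrtr_gt0 ?ltr_sqrt //; lra.
Qed.

Theorem mainTheorem8 (R : realType) (c kmin k0 k1 : R)
  (hc : 1 <= c)
  (hkmin_pos : 0 < kmin) (hkmin_le1 : kmin <= 1)
  (hkmin : Vpot kmin = eta_c c)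
  (hkmin_uniq : forall k : R, 0 < k -> k <= 1 -> Vpot k = eta_c c -> k = kmin)
  (hk1 : kmin <= k1) (hk1' : k1 < 1)
  (hk0 : 0 < k0) (hk01 : k0 <= k1) :
  (forall k : R, k1 < k < 1 -> Vbar k0 k1 k < Vpot k) /\
  (forall k2 : R, k1 < k2 <= 1 ->
     (((1 / Num.sqrt (1 + k0^-1)) *
        (asin ((1 - k1) / a_const c k0 k1) - asin ((1 - k2) / a_const c k0 k1)))%:E
     < (\int[@lebesgue_measure R]_(k in `]k1, k2[)
          (1 / Num.sqrt (eta_c c - Vpot k))%:E))%E) /\
  (k1 = kmin -> a_const c k0 k1 = 1 - kmin).
Proof.
(* [hkmin_uniq] holds automatically as [Vpot] decreases on ]0, 1]. *)
have V1 : Vpot k1 <= eta_c c.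
  move: hk1; rewrite le_eqVlt => /orP[/eqP <- | kk1]; first by rewrite hkmin.
  by rewrite -hkmin ltW // Vpot_lt // ltW.
split; [|split].
- by move=> k /andP[]; apply: Vbar_lt_Vpot.
- by move=> k2 /andP[k12 k21]; apply: integral_inv_sqrt_eta_sub_Vpot_gt.
- by move=> k1E; rewrite a_const_eq ?k1E // ?(ltW hk1') -k1E.
Qed.
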